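(* Let $Q$ be a groupoid quantale with base locale $A$ and let $X$ be a supported $Q$-module with support $\varsigma_X$. Then the following conditions are equivalent: (1) $\varsigma_X(q\cdot x)=\varsigma_Q(q\triangleleft\varsigma_X(x))$ for all $q\in Q$, $x\in X$; (2) $\varsigma_X(q\cdot x)\le\varsigma_Q(q)$ for all $q\in Q$, $x\in X$; (3) $\varsigma_X(q\cdot1_X)\le\varsigma_Q(q)$ for all $q\in Q$.
   Context: Let $A$ be a locale. An involutive $A$-$A$-quantale $Q$ is a sup-lattice with commuting unital left and right $A$-actions $a\triangleright q$, $q\triangleleft a$, an associative join-preserving multiplication with $(a\triangleright x)y=a\triangleright(xy)$, $(x\triangleleft a)y=x(a\triangleright y)$, $(xy)\triangleleft a=x(y\triangleleft a)$, and a join-preserving involution with $x^{**}=x$, $(xy)^*=y^*x^*$, $(a\triangleright x\triangleleft b)^*=b\triangleright x^*\triangleleft a$. A support is a sup-lattice homomorphism $\varsigma_Q:Q\to A$ with $\varsigma_Q(1_Q)=1_A$, $\varsigma_Q(x)\triangleright y\le xx^*y$, $\varsigma_Q(x)\triangleright x=x$; equivariant if $\varsigma_Q(a\triangleright x)=a\wedge\varsigma_Q(x)$. A groupoid quantale is such a $Q$ which is a frame with $(a\triangleright q)\wedge m=a\triangleright(q\wedge m)$, $m\wedge(q\triangleleft a)=(q\wedge m)\triangleleft a$, equipped with an equivariant support and a frame homomorphism $\upsilon:Q\to A$ with $\upsilon(a\triangleright1_Q)=a=\upsilon(1_Q\triangleleft a)$, such that the right adjoint of $Q\otimes_AQ\to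 Q$ preserves joins, $\bigvee_{xy\le a}\upsilon(x)\triangleright y=a$, and $\upsilon(a)\triangleright1_Q=\bigvee_{xx^*\le a}x$. A $Q$-module is a locale $X$ with a left $Q$-action $q\cdot x$ and unital left $A$-module structure $a\triangleright x$ satisfying $(a\triangleright q)\cdot x=a\triangleright(q\cdot x)$, $(q\triangleleft a)\cdot x=q\cdot(a\triangleright x)$, $a\triangleright(x\wedge y)=(a\triangleright x)\wedge y$. A pre-Hilbert $Q$-module has $\langle-,-\rangle:X\times X\to Q$ with $\langle q\cdot x,y\rangle=q\langle x,y\rangle$, $a\triangleright\langle x,1_X\rangle=\langle a\triangleright x,1_X\rangle$, $\langle\bigvee x_\alpha,y\rangle=\bigvee\langle x_\alpha,y\rangle$, $\langle x,y\rangle=\langle y,x\rangle^*$. A supported $Q$-module is a pre-Hilbert $Q$-module with a monotone $\varsigma_X:X\to A$ such that $\varsigma_X(1_X)=1_A$, $\varsigma_X(x)\triangleright1_X\le\langle x,x\rangle\cdot1_X$, and $\varsigma_X(x)\triangleright x=x$. *)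

From Stdlib Require Import Setoid.

Record SupLattice : Type := {
  sl_car :> Type;
  le : sl_car -> sl_car -> Prop;
  sup : (sl_car -> Prop) -> sl_car;
  le_refl : forall x, le x x;
  le_trans : forall x y z, le x y -> le y z -> le x z;
  le_antisym : forall x y, le x y -> le y x -> x = y;
  sup_ub : forall (S : sl_car -> Prop) x, S x -> le x (sup S);
  sup_least : forall (S : sl_car -> Prop) y,
      (forall x, S x -> le x y) -> le (sup S) y
}.
Arguments le {s} _ _.
Arguments sup {s} _.

Definition top {L : SupLattice} : L := sup (fun _ => True).

Definition image {T U : Type} (f : T -> U) (S : T -> Prop) : U -> Prop :=
  fun u => exists t, S t /\ u = f t.

Definition join_preserving {L M : SupLattice} (f : L -> M) : Prop :=
  forall S : L -> Prop, f (sup S) = sup (image f S).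

Definition monotone {L M : SupLattice} (f : L -> M) : Prop :=
  forall x y, le x y -> le (f x) (f y).

Record Frame : Type := {
  fr_sl :> SupLattice;
  meet : fr_sl -> fr_sl -> fr_sl;
  meet_glb : forall a b c, le c (meet a b) <-> (le c a /\ le c b);
  meet_sup_distr : forall a (S : fr_sl -> Prop),
      meet a (sup S) = sup (image (meet a) S)
}.
Arguments meet {f} _ _.

(* A locale is given by its frame of opens. *)
Definition Locale := Frame.

Definition frame_hom {L M : Frame} (f : L -> M) : Prop :=
  join_preserving f /\ (forall a b, f (meet a b) = meet (f a) (f b)) /\ f top = top.

(* Elements of Q (x)_A Q are the "balanced ideals" of
   Q x Q (Joyal--Tierney construction), ordered by inclusion; the join of a
   family of ideals is the least ideal containing their union. The right
   adjoint of  mu : Q (x)_A Q -> Q,  mu(S) = \/ { x y | (x,y) in S }, sends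
   q to the ideal { (x,y) | x y <= q }. ---------- *)
Definition balanced_ideal {A : Locale} {Q : SupLattice}
    (actl : A -> Q -> Q) (actr : Q -> A -> Q) (S : Q -> Q -> Prop) : Prop :=
  (forall x y x' y', S x y -> le x' x -> le y' y -> S x' y') /\
  (forall (X : Q -> Prop) y, (forall x, X x -> S x y) -> S (sup X) y) /\
  (forall x (Y : Q -> Prop), (forall y, Y y -> S x y) -> S x (sup Y)) /\
  (forall x a y, S (actr x a) y <-> S x (actl a y)).

Definition ideal_closure {A : Locale} {Q : SupLattice}
    (actl : A -> Q -> Q) (actr : Q -> A -> Q) (R : Q -> Q -> Prop) :
    Q -> Q -> Prop :=
  fun x y => forall S, balanced_ideal actl actr S ->
               (forall u v, R u v -> S u v) -> S x y.

Definition mul_radj {Q : SupLattice} (mul : Q -> Q -> Q) (q : Q) :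
    Q -> Q -> Prop :=
  fun x y => le (mul x y) q.

Definition mul_radj_join_preserving {A : Locale} {Q : SupLattice}
    (actl : A -> Q -> Q) (actr : Q -> A -> Q) (mul : Q -> Q -> Q) : Prop :=
  forall (F : Q -> Prop) x y,
    mul_radj mul (sup F) x y <->
    ideal_closure actl actr (fun u v => exists q, F q /\ mul_radj mul q u v) x y.

Record GroupoidQuantale (A : Locale) : Type := {
  gq_fr :> Frame;
  actl : A -> gq_fr -> gq_fr;
  actr : gq_fr -> A -> gq_fr;
  mul : gq_fr -> gq_fr -> gq_fr;
  inv : gq_fr -> gq_fr;
  qsupp : gq_fr -> A;
  ups : gq_fr -> A;
  actl_sup_l : forall (S : A -> Prop) q,
      actl (sup S) q = sup (image (fun a => actl a q) S);
  actl_sup_r : forall a (S : gq_fr -> Prop), actl a (sup S) = sup (image (actl a) S);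
  actl_assoc : forall a b q, actl (meet a b) q = actl a (actl b q);
  actl_unit : forall q, actl top q = q;
  actr_sup_l : forall (S : gq_fr -> Prop) a,
      actr (sup S) a = sup (image (fun q => actr q a) S);
  actr_sup_r : forall q (S : A -> Prop), actr q (sup S) = sup (image (actr q) S);
  actr_assoc : forall q a b, actr q (meet a b) = actr (actr q a) b;
  actr_unit : forall q, actr q top = q;
  act_comm : forall a q b, actr (actl a q) b = actl a (actr q b);
  mul_assoc : forall x y z, mul (mul x y) z = mul x (mul y z);
  mul_sup_l : forall (S : gq_fr -> Prop) y,
      mul (sup S) y = sup (image (fun x => mul x y) S);
  mul_sup_r : forall x (S : gq_fr -> Prop), mul x (sup S) = sup (image (mul x) S);
  mul_actl : forall a x y, mul (actl a x) y = actl a (mul x y);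
  mul_actm : forall x a y, mul (actr x a) y = mul x (actl a y);
  mul_actr : forall x y a, actr (mul x y) a = mul x (actr y a);
  inv_sup : join_preserving inv;
  inv_inv : forall x, inv (inv x) = x;
  inv_mul : forall x y, inv (mul x y) = mul (inv y) (inv x);
  inv_act : forall a x b, inv (actr (actl a x) b) = actr (actl b (inv x)) a;
  qsupp_sup : join_preserving qsupp;
  qsupp_top : qsupp top = top;
  qsupp_le : forall x y, le (actl (qsupp x) y) (mul (mul x (inv x)) y);
  qsupp_fix : forall x, actl (qsupp x) x = x;
  qsupp_equiv : forall a x, qsupp (actl a x) = meet a (qsupp x);
  meet_actl : forall a q m, meet (actl a q) m = actl a (meet q m);
  meet_actr : forall q a m, meet m (actr q a) = actr (meet q m) a;
  ups_hom : frame_hom ups;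
  ups_actl : forall a, ups (actl a top) = a;
  ups_actr : forall a, ups (actr top a) = a;
  radj_join : mul_radj_join_preserving actl actr mul;
  ups_cover : forall a : gq_fr,
      sup (fun z => exists x y, le (mul x y) a /\ z = actl (ups x) y) = a;
  ups_top : forall a : gq_fr,
      actl (ups a) top = sup (fun x => le (mul x (inv x)) a)
}.
Arguments actl {A g} _ _.
Arguments actr {A g} _ _.
Arguments mul {A g} _ _.
Arguments inv {A g} _.
Arguments qsupp {A g} _.
Arguments ups {A g} _.

Record SupportedModule (A : Locale) (Q : GroupoidQuantale A) : Type := {
  sm_fr :> Frame;
  qact : Q -> sm_fr -> sm_fr;
  aact : A -> sm_fr -> sm_fr;
  ip : sm_fr -> sm_fr -> Q;
  xsupp : sm_fr -> A;
  qact_sup_l : forall (S : Q -> Prop) x,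
      qact (sup S) x = sup (image (fun q => qact q x) S);
  qact_sup_r : forall q (S : sm_fr -> Prop), qact q (sup S) = sup (image (qact q) S);
  qact_assoc : forall q r x, qact (mul q r) x = qact q (qact r x);
  aact_sup_l : forall (S : A -> Prop) x,
      aact (sup S) x = sup (image (fun a => aact a x) S);
  aact_sup_r : forall a (S : sm_fr -> Prop), aact a (sup S) = sup (image (aact a) S);
  aact_assoc : forall a b x, aact (meet a b) x = aact a (aact b x);
  aact_unit : forall x, aact top x = x;
  qact_actl : forall a q x, qact (actl a q) x = aact a (qact q x);
  qact_actr : forall q a x, qact (actr q a) x = qact q (aact a x);
  aact_meet : forall a x y, aact a (meet x y) = meet (aact a x) y;
  ip_qact : forall q x y, ip (qact q x) y = mul q (ip x y);
  ip_aact : forall a x, actl a (ip x top) = ip (aact a x) top;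
  ip_sup : forall (S : sm_fr -> Prop) y, ip (sup S) y = sup (image (fun x => ip x y) S);
  ip_sym : forall x y, ip x y = inv (ip y x);
  xsupp_mono : monotone xsupp;
  xsupp_top : xsupp top = top;
  xsupp_le : forall x, le (aact (xsupp x) top) (qact (ip x x) top);
  xsupp_fix : forall x, aact (xsupp x) x = x
}.
Arguments qact {A Q s} _ _.
Arguments aact {A Q s} _ _.
Arguments ip {A Q s} _ _.
Arguments xsupp {A Q s} _.

(* (2) and (3) are equivalent by monotonicity of the support, and (1) gives (2)
   because q ◁ a ≤ q.  For (2) ⇒ (1), put r := q ◁ ςX(x), so that r·x = q·x and
   (2) gives ςX(q·x) ≤ ςQ(r).  For the reverse bound, with P := ⟨1,1⟩,
     ςQ(r) ∧ ςQ(P) = ςQ(ςQ(r) ▷ P) ≤ ςQ(r r* P) ≤ ςQ(r P)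
                  ≤ ςQ(⟨q·x,1⟩ P) ≤ ςQ(⟨q·x,1⟩) ≤ ςX(q·x),
   the third step because ςX(x) ▷ 1 ≤ ⟨x,x⟩·1.  Finally (3) at q := P forces
   ςQ(P) = 1, since 1 = ςX(1) ≤ ςX(P·1). *)

Lemma le_top (L : SupLattice) (x : L) : le x top.
Proof. apply sup_ub. exact I. Qed.

Lemma join_preserving_monotone (L M : SupLattice) (f : L -> M) :
  join_preserving f -> monotone f.
Proof.
  intros hf x y hxy.
  assert (hpair : sup (fun z => z = x \/ z = y) = y).
  { apply le_antisym.
    - apply sup_least. intros z [-> | ->]; [exact hxy | apply le_refl].
    - apply sup_ub. right. reflexivity. }
  rewrite <- hpair, hf. apply sup_ub. exists x. split; [left |]; reflexivity.
Qed.

Lemma meet_le_l (F : Frame) (a b : F) : le (meet a b) a.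
Proof. apply (meet_glb F a b (meet a b)), le_refl. Qed.

Lemma meet_top (F : Frame) (a : F) : meet a top = a.
Proof.
  apply le_antisym; [apply meet_le_l |].
  apply meet_glb. split; [apply le_refl | apply le_top].
Qed.

Section GroupoidQuantaleFacts.
Variables (A : Locale) (Q : GroupoidQuantale A).

Lemma qsupp_monotone : monotone (@qsupp A Q).
Proof. apply join_preserving_monotone, qsupp_sup. Qed.

Lemma inv_monotone : monotone (@inv A Q).
Proof. apply join_preserving_monotone, inv_sup. Qed.

Lemma mul_monotone_l (y : Q) : monotone (fun x : Q => mul x y).
Proof. apply join_preserving_monotone. intro S. apply mul_sup_l. Qed.

Lemma mul_monotone_r (x : Q) : monotone (@mul A Q x).
Proof. apply join_preserving_monotone. intro S. apply mul_sup_r. Qed.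

Lemma actr_le (q : Q) (a : A) : le (actr q a) q.
Proof.
  rewrite <- (actr_unit A Q q) at 2.
  apply (join_preserving_monotone A Q (actr q)); [intro S; apply actr_sup_r | apply le_top].
Qed.

Lemma qsupp_mul_le (x y : Q) : le (qsupp (mul x y)) (qsupp x).
Proof.
  rewrite <- (qsupp_fix A Q x) at 1.
  rewrite mul_actl, qsupp_equiv. apply meet_le_l.
Qed.

Lemma qsupp_meet_le_mul_inv (x y : Q) :
  le (meet (qsupp x) (qsupp y)) (qsupp (mul x (mul (inv x) y))).
Proof.
  rewrite <- qsupp_equiv, <- mul_assoc.
  apply qsupp_monotone, qsupp_le.
Qed.

End GroupoidQuantaleFacts.

Section SupportedModuleFacts.
Variables (A : Locale) (Q : GroupoidQuantale A) (X : SupportedModule A Q).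

Lemma qact_monotone_r (q : Q) : monotone (@qact A Q X q).
Proof. apply join_preserving_monotone. intro S. apply qact_sup_r. Qed.

Lemma ip_monotone_l (y : X) : monotone (fun x : X => ip x y).
Proof. apply join_preserving_monotone. intro S. apply ip_sup. Qed.

Lemma ip_monotone_r (x : X) : monotone (@ip A Q X x).
Proof.
  intros y z hyz. rewrite (ip_sym A Q X x y), (ip_sym A Q X x z).
  apply inv_monotone, ip_monotone_l, hyz.
Qed.

Lemma qact_actr_xsupp (q : Q) (x : X) : qact (actr q (xsupp x)) x = qact q x.
Proof. rewrite qact_actr, xsupp_fix. reflexivity. Qed.

Lemma mul_ip_le_ip_top (q : Q) (x y : X) : le (mul q (ip x y)) (@ip A Q X top y).
Proof. rewrite <- ip_qact. apply ip_monotone_l, le_top. Qed.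

Lemma qsupp_ip_top_le (y : X) : le (qsupp (ip y top)) (xsupp y).
Proof.
  rewrite <- (xsupp_fix A Q X y) at 1.
  rewrite <- ip_aact, qsupp_equiv. apply meet_le_l.
Qed.

Lemma mul_actr_xsupp_le (q : Q) (x : X) :
  le (mul (actr q (xsupp x)) (@ip A Q X top top))
     (mul (ip (qact q x) top) (@ip A Q X top top)).
Proof.
  rewrite mul_actm, ip_aact, ip_qact, mul_assoc.
  apply mul_monotone_r.
  assert (hsupp : le (aact (xsupp x) top) (qact (ip x x) top)) by apply xsupp_le.
  apply (ip_monotone_l top) in hsupp. rewrite ip_qact in hsupp.
  apply (le_trans _ _ _ _ hsupp), mul_monotone_l, ip_monotone_r, le_top.
Qed.

Lemma qsupp_actr_xsupp_meet_le (q : Q) (x : X) :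
  le (meet (qsupp (actr q (xsupp x))) (qsupp (@ip A Q X top top)))
     (xsupp (qact q x)).
Proof.
  eapply le_trans; [apply qsupp_meet_le_mul_inv |].
  eapply le_trans; [apply qsupp_monotone, mul_monotone_r, mul_ip_le_ip_top |].
  eapply le_trans; [apply qsupp_monotone, mul_actr_xsupp_le |].
  eapply le_trans; [apply qsupp_mul_le |].
  apply qsupp_ip_top_le.
Qed.

Lemma qsupp_ip_top_top :
  (forall q : Q, le (xsupp (qact q (@top X))) (qsupp q)) ->
  qsupp (@ip A Q X top top) = top.
Proof.
  intro h. apply le_antisym; [apply le_top |].
  rewrite <- (xsupp_top A Q X). eapply le_trans; [| apply h].
  apply xsupp_mono.
  rewrite <- (aact_unit A Q X top) at 1. rewrite <- (xsupp_top A Q X) at 1.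
  apply xsupp_le.
Qed.

End SupportedModuleFacts.

Theorem lemma4p5 (A : Locale) (Q : GroupoidQuantale A)
    (X : SupportedModule A Q) :
  ((forall (q : Q) (x : X), xsupp (qact q x) = qsupp (actr q (xsupp x))) <->
   (forall (q : Q) (x : X), le (xsupp (qact q x)) (qsupp q))) /\
  ((forall (q : Q) (x : X), le (xsupp (qact q x)) (qsupp q)) <->
   (forall q : Q, le (xsupp (qact q (@top X))) (qsupp q))).
Proof.
  assert (equiv23 : (forall (q : Q) (x : X), le (xsupp (qact q x)) (qsupp q)) <->
                    (forall q : Q, le (xsupp (qact q (@top X))) (qsupp q))).
  { split; intros h q; [apply h |].
    intro x. eapply le_trans; [| apply (h q)].
    apply xsupp_mono, qact_monotone_r, le_top. }
  split; [split | exact equiv23].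
  - intros h q x. rewrite h. apply qsupp_monotone, actr_le.
  - intros h q x. apply le_antisym.
    + rewrite <- qact_actr_xsupp. apply h.
    + rewrite <- (meet_top A (qsupp _)), <- (qsupp_ip_top_top A Q X).
      * apply qsupp_actr_xsupp_meet_le.
      * apply equiv23, h.
Qed.
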